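(* Suppose $\mathsf{N}=(\mathsf{M}-1)\mathsf{T}+1$ and consider the coding scheme described in the context. For each $k=0,1,\dots,\mathsf{M}-1$ there exists a function $f_k:\mathbb{R}^{\mathsf{N}}\to\mathbb{R}$ (which may depend on $n$) such that $$\lim_{n\to\infty} f_k\big(\tilde V^{(1)},\dots,\tilde V^{(\mathsf{N})}\big)=D_k$$ for every realization of the random variables, where $\tilde V^{(j)}$ depends on $n$ through $\zeta_1(n),\zeta_2(n)$.
   Context: Let $\mathsf{M},\mathsf{T}$ be positive integers, $\eta>0$, $\sigma^2>0$. Real inputs $A_1,\dots,A_{\mathsf{M}}$. For each $i\in[\mathsf{M}]$ let $R_i$ (with variance $\sigma^2$) and $S_{i,1},\dots,S_{i,\mathsf{T}-1}$ be zero-mean random variables, all of them mutually independent and independent of the inputs. Let $\zeta_1(n),\zeta_2(n)$ be strictly positive sequences with $\lim_{n\to\infty}\zeta_1(n)/\zeta_2(n)=\lim_{n\to\infty}\zeta_2(n)=0$ and, when $\mathsf{T}\ge2$, $\lim_{n\to\infty}\zeta_2(n)^{\mathsf{T}/(\mathsf{T}-1)}/\zeta_1(n)=0$. Encoding polynomials: if $\mathsf{T}\ge2$, $p_i(x)=(A_i+R_i)+\zeta_2(n)\sum_{t=1}^{\mathsf{T}-1}S_{i,t}x^t+\zeta_1(n)R_ix^{\mathsf{T}}$; if $\mathsf{T}=1$, $p_i(x)=(A_i+R_i)+\zeta_1(n)R_ix$. Fix distinct reals $x_1,\dots,x_{\mathsf{N}}$; node $j$ outputs $\tilde V^{(j)}=\prod_{i=1}^{\mathsf{M}}p_i(x_j)$.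 Let $\alpha=\eta/(\sigma^2+\eta)$ and $Z_i=\alpha(A_i+R_i)-A_i$ (equivalently $Z_i=-\frac{\sigma^2}{\sigma^2+\eta}A_i+\frac{\eta}{\sigma^2+\eta}R_i$). For $k=0,\dots,\mathsf{M}-1$, $D_k=\sum_{\mathcal{S}\subseteq[\mathsf{M}],|\mathcal{S}|=k}\big(\prod_{i\in\mathcal{S}}A_i\big)\big(\prod_{l\notin\mathcal{S}}(A_l+Z_l)\big)$. *)

From HB Require Import structures.
From mathcomp Require Import all_boot all_order all_algebra.
From mathcomp Require Import all_classical all_reals all_analysis.
Unset Strict Implicit. Unset Printing Implicit Defensive.
Import Order.TTheory GRing.Theory Num.Theory.
Local Open Scope ring_scope.

Section Coding.
Variable R : realType.

(* Encoding polynomial p_i evaluated at x, for parameters z1 = zeta_1(n),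
   z2 = zeta_2(n); a = A_i, r = R_i, s t = S_{i,t+1} (t : 'I_(T-1)). *)
Definition enc_poly (T : nat) (z1 z2 a r : R) (s : 'I_T.-1 -> R) (x : R) : R :=
  if (2 <= T)%N then
    (a + r) + z2 * (\sum_(t < T.-1) s t * x ^+ t.+1) + z1 * r * x ^+ T
  else (a + r) + z1 * r * x.

Definition node_output (M T : nat) (z1 z2 : R) (A Rv : 'I_M -> R)
  (S : 'I_M -> 'I_T.-1 -> R) (xj : R) : R :=
  \prod_(i < M) @enc_poly T z1 z2 (A i) (Rv i) (S i) xj.

Definition alpha_c (eta sigma2 : R) : R := eta / (sigma2 + eta).

Definition Zc (eta sigma2 a r : R) : R := alpha_c eta sigma2 * (a + r) - a.

Definition Dk (M : nat) (eta sigma2 : R) (A Rv : 'I_M -> R) (k : nat) : R :=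
  \sum_(Sset : {set 'I_M} | #|Sset| == k)
     (\prod_(i in Sset) A i) *
     (\prod_(l in ~: Sset) (A l + Zc eta sigma2 (A l) (Rv l))).

End Coding.

From HB Require Import structures.
From mathcomp Require Import all_boot all_order all_algebra.
From mathcomp Require Import all_classical all_reals all_analysis.
From mathcomp Require Import ring zify.
Import Order.TTheory GRing.Theory Num.Theory.
Import numFieldNormedType.Exports.
Local Open Scope classical_set_scope.
Local Open Scope ring_scope.

(* Node j reveals P(x_j), where P = prod_i p_i has degree at most M T.  With
   s = zeta1^(1/T), the coefficient of x^d in p_i divided by s^d tends to that
   of (A_i + R_i) + R_i y^T: the top coefficient zeta1 R_i / s^T is exactly R_i,
   and for 0 < d < T the noise coefficient zeta2 S / s^d vanishes by the rate
   assumption.  Hence P_d / s^d tends to the y^d-coefficient of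
   prod_i ((A_i + R_i) + R_i y^T), whose y^(jT)-coefficient is the mixed
   elementary symmetric sum E_j of (A_i + R_i, R_i).  The dual basis of the
   Vandermonde matrix of the N = (M-1)T + 1 nodes extracts P_(jT) exactly up to
   terms P_d with d >= N > jT, which die out after division by s^(jT).  Finally
   alpha (A + R) + A u = (A + R)(alpha + u) - R u, so D_k, the u^k-coefficient
   of prod_i (alpha (A_i + R_i) + A_i u), is a fixed combination of the E_j. *)

Section MixedElementarySymmetric.
Context {R : comNzRingType} {M : nat}.
Implicit Types a b : 'I_M -> R.

Definition mixed_esym a b (j : nat) : R :=
  \sum_(S : {set 'I_M} | #|S| == j) (\prod_(i in S) b i) * (\prod_(i in ~: S) a i).

Lemma prod_mixed_esym a b u v :
  \prod_(i < M) (a i * u + b i * v) =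
  \sum_(j < M.+1) mixed_esym a b j * (u ^+ (M - j) * v ^+ j).
Proof.
under eq_bigr do rewrite addrC.
rewrite bigA_distr.
rewrite (partition_big (fun S : {set 'I_M} => inord #|S| : 'I_M.+1) xpredT) //.
have card_lt (S : {set 'I_M}) : (#|S| < M.+1)%N.
  by rewrite ltnS -[X in (_ <= X)%N]card_ord max_card.
apply: eq_bigr => j _; rewrite big_distrl /=.
apply: eq_big => [S | S /eqP jS].
  apply/eqP/eqP => [<- | Sj]; first by rewrite inordK ?card_lt.
  by apply/val_inj; rewrite /= inordK ?card_lt.
have -> : (j : nat) = #|S| by rewrite -jS inordK ?card_lt.
rewrite (bigID (mem S)) /=.
rewrite (eq_bigr (fun i => b i * v)) => [|i ->] //.
rewrite [X in _ * X](eq_bigr (fun i => a i * u)) => [|i /negbTE ->] //.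
rewrite !big_split /= !prodr_const.
have -> : #|(fun i : 'I_M => i \notin S)| = (M - #|S|)%N.
  by apply/eqP; rewrite -(eqn_add2l #|S|) cardC card_ord subnKC // -ltnS card_lt.
rewrite [\prod_(i < M | i \notin S) a i](eq_bigl (fun i => i \in ~: S)).
  by ring.
by move=> i; rewrite inE.
Qed.

End MixedElementarySymmetric.

Lemma rmorph_mixed_esym (R S : comNzRingType) (f : {rmorphism R -> S}) M
    (a b : 'I_M -> R) j :
  f (mixed_esym a b j) = mixed_esym (f \o a) (f \o b) j.
Proof.
by rewrite rmorph_sum; apply: eq_bigr => A _; rewrite rmorphM !rmorph_prod.
Qed.

Lemma coef_prod_mixed_esym (R : comNzRingType) (M T : nat) (a b : 'I_M -> R) j :
  (0 < T)%N -> (j <= M)%N ->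
  (\prod_(i < M) ((a i)%:P + (b i)%:P * 'X^T))`_(j * T) = mixed_esym a b j.
Proof.
move=> T_gt0 jM.
under eq_bigr do rewrite -[(a _)%:P]mulr1.
rewrite prod_mixed_esym coef_sum (bigD1 (Ordinal (jM : (j < M.+1)%N))) //=.
rewrite -rmorph_mixed_esym expr1n mul1r -exprM coefCM coefXn mulnC eqxx mulr1.
rewrite big1 ?addr0 // => i /eqP neq_ij.
rewrite -rmorph_mixed_esym expr1n mul1r -exprM coefCM coefXn eqn_pmul2l // eq_sym.
suff /negbTE -> : (i : nat) != j by rewrite mulr0.
by apply/eqP => ij; apply: neq_ij; exact: val_inj.
Qed.

Lemma coef_comp_scaleX (R : comNzRingType) (p : {poly R}) c d :
  (p \Po (c *: 'X))`_d = p`_d * c ^+ d.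
Proof.
rewrite coef_comp_poly; under eq_bigr do rewrite exprZn coefZ coefXn.
have [dp | pd] := ltnP d (size p).
  rewrite (bigD1 (Ordinal dp)) //= eqxx mulr1 big1 ?addr0 // => i /eqP ni.
  suff /negbTE -> : d != i by rewrite !mulr0.
  by apply/eqP => di; apply: ni; exact: val_inj.
rewrite nth_default // mul0r big1 // => i _.
suff /negbTE -> : d != i by rewrite !mulr0.
by apply/eqP => di; move: (ltn_ord i); rewrite -di ltnNge pd.
Qed.

Lemma Dk_mixed_esym (R : realType) M eta sigma2 (A Rv : 'I_M -> R) k :
  (k < M)%N ->
  Dk R M eta sigma2 A Rv k =
  \sum_(j < M) (((alpha_c R eta sigma2)%:P + 'X) ^+ (M - j) * (- 'X) ^+ j)`_k *
    mixed_esym (fun i => A i + Rv i) Rv j.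
Proof.
move=> kM; set al := alpha_c R eta sigma2.
have split_factor i : (A i + Zc R eta sigma2 (A i) (Rv i))%:P + (A i)%:P * 'X^1 =
    (A i + Rv i)%:P * (al%:P + 'X) + (Rv i)%:P * (- 'X).
  by rewrite /Zc -/al expr1 !(rmorphD, rmorphN, rmorphM) /=; ring.
have -> : Dk R M eta sigma2 A Rv k =
    mixed_esym (fun i => A i + Zc R eta sigma2 (A i) (Rv i)) A k by [].
rewrite -(@coef_prod_mixed_esym _ _ 1) ?muln1 ?(ltnW kM) //.
rewrite (eq_bigr _ (fun i _ => split_factor i)) prod_mixed_esym coef_sum.
rewrite big_ord_recr /= subnn expr0 mul1r exprNn mulrA coefMXn kM addr0.
by apply: eq_bigr => j _; rewrite -rmorph_mixed_esym coefCM mulrC.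
Qed.

Section VandermondeDual.
Context {F : fieldType} {N : nat} (x : 'I_N -> F).
Hypothesis x_inj : injective x.

Definition vandermonde_dual : 'M[F]_N := invmx (Vandermonde N (\row_i x i)).

Lemma Vandermonde_unitmx : Vandermonde N (\row_i x i) \in unitmx.
Proof.
rewrite unitmxE det_Vandermonde unitfE.
apply/prodf_neq0 => i _; apply/prodf_neq0 => j ij.
by rewrite !mxE subr_eq0; apply: contraTneq ij => /x_inj ->; rewrite ltnn.
Qed.

Lemma sum_exprn_vandermonde_dual (d m : 'I_N) :
  \sum_(i < N) x i ^+ d * vandermonde_dual i m = (d == m)%:R.
Proof.
have /matrixP/(_ d m) := mulmxV Vandermonde_unitmx.
by rewrite !mxE => <-; apply: eq_bigr => i _; rewrite !mxE.
Qed.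

End VandermondeDual.

Section Limits.
Context {R : realType}.

Lemma cvg_exprn {u : nat -> R} {l : R} k :
  u @ \oo --> l -> (fun n => u n ^+ k) @ \oo --> l ^+ k.
Proof. exact: (continuous_cvg _ (@exprn_continuous R k l)). Qed.

Lemma cvg_sum_ord K (u : 'I_K -> nat -> R) (l : 'I_K -> R) :
  (forall i, u i @ \oo --> l i) ->
  (fun n => \sum_(i < K) u i n) @ \oo --> \sum_(i < K) l i.
Proof. by move=> ul; apply: cvg_big => //; exact: add_continuous. Qed.

Lemma cvg0_root (u : nat -> R) k : (0 < k)%N -> (forall n, 0 <= u n) ->
  (fun n => u n ^+ k) @ \oo --> 0 -> u @ \oo --> 0.
Proof.
move=> k_gt0 u_ge0 uk0; apply/cvgr0Pnorm_lt => e e_gt0.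
apply: filterS (cvgr0_norm_lt _ uk0 _ (exprn_gt0 k e_gt0)) => n /=.
by rewrite !ger0_norm ?exprn_ge0 ?u_ge0 // ltr_pXn2r // ?nnegrE ?u_ge0 ?(ltW e_gt0).
Qed.

Lemma cvg0_ratio (u v : nat -> R) : (forall n, v n != 0) ->
  (fun n => u n / v n) @ \oo --> 0 -> v @ \oo --> 0 -> u @ \oo --> 0.
Proof.
move=> v_neq0 uv0 v0; rewrite -(mulr0 0).
have -> : u = (fun n => u n / v n * v n) by apply/funext => n; rewrite divfK.
exact: cvgM.
Qed.

Definition root_pow (T : nat) (z : R) : R := z `^ (T%:R)^-1.

Lemma root_pow_gt0 T z : 0 < z -> 0 < root_pow T z.
Proof. exact: powR_gt0. Qed.

Lemma root_powK T z : (0 < T)%N -> 0 <= z -> root_pow T z ^+ T = z.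
Proof.
move=> T_gt0 z_ge0.
by rewrite -powR_mulrn ?powR_ge0 // -powRrM mulVf ?powRr1 // pnatr_eq0 -lt0n.
Qed.

Lemma cvg_root_pow0 T (z : nat -> R) : (0 < T)%N -> (forall n, 0 < z n) ->
  z @ \oo --> 0 -> (fun n => root_pow T (z n)) @ \oo --> 0.
Proof.
move=> T_gt0 z_gt0 z0; apply: (@cvg0_root _ T) => // [n|].
  exact/ltW/root_pow_gt0.
by under eq_cvg do rewrite root_powK ?ltW //.
Qed.

Lemma cvg0_div_root_pow T d (z1 z2 : nat -> R) : (0 < d < T)%N ->
  (forall n, 0 < z1 n) -> (forall n, 0 < z2 n) -> z1 @ \oo --> 0 ->
  (fun n => z2 n `^ (T%:R / T.-1%:R) / z1 n) @ \oo --> 0 ->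
  (fun n => z2 n / root_pow T (z1 n) ^+ d) @ \oo --> 0.
Proof.
move=> /andP[d_gt0 dT] z1_gt0 z2_gt0 z1_0 rate.
have T_gt0 : (0 < T)%N by apply: ltn_trans dT.
set s := fun n => root_pow T (z1 n).
have s_neq0 n : s n != 0 by rewrite gt_eqF ?root_pow_gt0.
have top : (fun n => z2 n / s n ^+ T.-1) @ \oo --> 0.
  apply: (@cvg0_root _ T) => // [n|].
    by rewrite divr_ge0 ?exprn_ge0 ?ltW ?root_pow_gt0.
  have T1_neq0 : T.-1%:R != 0 :> R by rewrite pnatr_eq0 -lt0n; lia.
  (* (z2 / s^(T-1))^T = (z2^(T/(T-1)) / z1)^(T-1) *)
  under eq_cvg => n.
    rewrite expr_div_n -exprM mulnC exprM root_powK ?ltW //.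
    rewrite -[z2 n ^+ T](powR_mulrn _ (ltW (z2_gt0 n))) -[T%:R](divfK T1_neq0).
    rewrite powRrM powR_mulrn ?powR_ge0 // -expr_div_n.
  over.
  have T1_gt0 : (0 < T.-1)%N by lia.
  by have := cvg_exprn T.-1 rate; rewrite expr0n eqn0Ngt T1_gt0.
have dT1 : (d <= T.-1)%N by lia.
have -> : (fun n => z2 n / root_pow T (z1 n) ^+ d) =
    (fun n => z2 n / s n ^+ T.-1 * s n ^+ (T.-1 - d)).
  apply/funext => n; rewrite -[in s n ^+ T.-1](subnKC dT1) exprD.
  by field; apply/andP; split; apply: expf_neq0; exact: s_neq0.
rewrite -(mul0r (0 ^+ (T.-1 - d))).
by apply: cvgM top _; apply/cvg_exprn/cvg_root_pow0.
Qed.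

Lemma cvg_coef_prod M (p : 'I_M -> nat -> {poly R}) (q : 'I_M -> {poly R}) :
  (forall i d, (fun n => (p i n)`_d) @ \oo --> (q i)`_d) ->
  forall d, (fun n => (\prod_(i < M) p i n)`_d) @ \oo --> (\prod_(i < M) q i)`_d.
Proof.
elim: M p q => [|M IH] p q pq d.
  rewrite big_ord0; under eq_cvg do rewrite big_ord0; exact: cvg_cst.
rewrite big_ord_recr coefM; under eq_cvg do rewrite big_ord_recr coefM.
apply: cvg_sum_ord => j; apply: cvgM; last exact: pq.
by apply: IH => i; apply: pq.
Qed.

Lemma cvg_coef_prod_scaled M (p : 'I_M -> nat -> {poly R}) (q : 'I_M -> {poly R})
    (s : nat -> R) : (forall n, s n != 0) ->
  (forall i d, (fun n => (p i n)`_d / s n ^+ d) @ \oo --> (q i)`_d) ->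
  forall d, (fun n => (\prod_(i < M) p i n)`_d / s n ^+ d) @ \oo -->
    (\prod_(i < M) q i)`_d.
Proof.
move=> s_neq0 pq d.
have scaled n (r : {poly R}) k : r`_k / s n ^+ k = (r \Po ((s n)^-1 *: 'X))`_k.
  by rewrite coef_comp_scaleX exprVn.
under eq_cvg do rewrite scaled rmorph_prod.
by apply: cvg_coef_prod => i k; under eq_cvg do rewrite -scaled; exact: pq.
Qed.

Lemma cvg_scaled_interpolation N K m (x w : 'I_N -> R) (P : nat -> {poly R})
    (s : nat -> R) (q : nat -> R) :
  (forall d : 'I_N, \sum_(i < N) x i ^+ d * w i = (d == m :> nat)%:R) ->
  (m < N)%N -> (m < K)%N -> (forall n, size (P n) <= K)%N ->
  (forall n, s n != 0) -> s @ \oo --> 0 ->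
  (forall d, (fun n => (P n)`_d / s n ^+ d) @ \oo --> q d) ->
  (fun n => (\sum_(i < N) (P n).[x i] * w i) / s n ^+ m) @ \oo --> q m.
Proof.
move=> dual mN mK sizeP s_neq0 s0 Pq.
pose c d := \sum_(i < N) x i ^+ d * w i.
have expand n : \sum_(i < N) (P n).[x i] * w i = \sum_(d < K) (P n)`_d * c d.
  under [RHS]eq_bigr do rewrite mulr_sumr.
  rewrite exchange_big /=; apply: eq_bigr => i _.
  rewrite (horner_coef_wide _ (sizeP n)) mulr_suml.
  by apply: eq_bigr => d _; rewrite mulrA.
under eq_cvg do rewrite expand mulr_suml.
have -> : q m = \sum_(d < K | d == m :> nat) q d by rewrite big_ord1_eq mK.
rewrite big_mkcond /=; apply: cvg_sum_ord => d.
have [dm | md] := ltnP d m.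
  have c0 : c d = 0 by rewrite /c (dual (Ordinal (ltn_trans dm mN))) /= ltn_eqF.
  rewrite ltn_eqF //; under eq_cvg do rewrite c0 mulr0 mul0r.
  exact: cvg_cst.
have -> : (if d == m :> nat then q d else 0) = q d * 0 ^+ (d - m) * c d.
  have [dm | dm] := eqVneq (d : nat) m.
    by rewrite dm subnn expr0 mulr1 /c (dual (Ordinal mN)) eqxx mulr1.
  have m_lt_d : (m < d)%N by rewrite ltn_neqAle eq_sym dm md.
  by rewrite expr0n subn_eq0 leqNgt m_lt_d mulr0 mul0r.
have split n :
    (P n)`_d * c d / s n ^+ m = (P n)`_d / s n ^+ d * s n ^+ (d - m) * c d.
  have -> : s n ^+ d = s n ^+ m * s n ^+ (d - m) by rewrite -exprD subnKC.
  by field; rewrite !expf_neq0.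
under eq_cvg do rewrite split.
by apply: cvgM (cvg_cst _); apply: cvgM (Pq d) (cvg_exprn _ s0).
Qed.

End Limits.

Section Encoding.
Context {R : realType}.

Definition encoding_poly T (z1 z2 a r : R) (s : 'I_T.-1 -> R) : {poly R} :=
  (a + r)%:P + z2 *: \sum_(t < T.-1) s t *: 'X^(t.+1) + (z1 * r) *: 'X^T.

Lemma horner_encoding_poly T z1 z2 a r s y : (0 < T)%N ->
  (encoding_poly T z1 z2 a r s).[y] = enc_poly R T z1 z2 a r s y.
Proof.
move=> T_gt0; rewrite /enc_poly /encoding_poly !hornerE horner_sum.
under eq_bigr do rewrite hornerZ hornerXn.
case: ifP => // T_lt2; have T1 : T = 1%N by lia.
rewrite big1 => [|t _]; last by have := ltn_ord t; lia.
by rewrite T1 mulr0 addr0 expr1.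
Qed.

Lemma coef_shifted_sum_eq0 T (s : 'I_T.-1 -> R) d : (d == 0)%N || (T <= d)%N ->
  (\sum_(t < T.-1) s t *: 'X^(t.+1))`_d = 0.
Proof.
move=> hd; rewrite coef_sum big1 // => t _; rewrite coefZ coefXn.
suff /negbTE -> : d != t.+1 by rewrite mulr0.
by apply/eqP => dt; move: (ltn_ord t) hd; rewrite dt; lia.
Qed.

Lemma coef_encoding_poly_scaled T z1 z2 a r s d : (0 < T)%N -> 0 < z1 ->
  (encoding_poly T z1 z2 a r s)`_d / root_pow T z1 ^+ d =
  ((a + r)%:P + r%:P * 'X^T)`_d +
  z2 / root_pow T z1 ^+ d * (\sum_(t < T.-1) s t *: 'X^(t.+1))`_d.
Proof.
move=> T_gt0 z1_gt0; have sT : root_pow T z1 ^+ T = z1 by rewrite root_powK ?ltW.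
have s_neq0 : root_pow T z1 != 0 by rewrite gt_eqF ?root_pow_gt0.
rewrite /encoding_poly !coefD !coefZ coefCM !coefC coefXn.
have [->|_] := eqVneq d T.
  by rewrite sT gtn_eqF //; field; rewrite gt_eqF.
rewrite !mulr0 !addr0; case: eqP => [->|_]; first by rewrite expr0 !divr1.
by rewrite !add0r mulrAC.
Qed.

Lemma size_encoding_poly T z1 z2 a r s : (0 < T)%N ->
  (size (encoding_poly T z1 z2 a r s) <= T.+1)%N.
Proof.
move=> T_gt0; apply/leq_sizeP => d Td.
rewrite /encoding_poly !coefD coefC !coefZ coefXn coef_shifted_sum_eq0; last by lia.
by rewrite gtn_eqF ?gtn_eqF ?mulr0 ?addr0 //; lia.
Qed.

Lemma cvg_coef_encoding_poly_scaled T (z1 z2 : nat -> R) a r s d :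
  (0 < T)%N -> (forall n, 0 < z1 n) -> (forall n, 0 < z2 n) -> z1 @ \oo --> 0 ->
  ((2 <= T)%N -> (fun n => z2 n `^ (T%:R / T.-1%:R) / z1 n) @ \oo --> 0) ->
  (fun n => (encoding_poly T (z1 n) (z2 n) a r s)`_d / root_pow T (z1 n) ^+ d)
    @ \oo --> ((a + r)%:P + r%:P * 'X^T)`_d.
Proof.
move=> T_gt0 z1_gt0 z2_gt0 z1_0 rate.
under eq_cvg do rewrite coef_encoding_poly_scaled //.
suff mid : (fun n => z2 n / root_pow T (z1 n) ^+ d *
    (\sum_(t < T.-1) s t *: 'X^(t.+1))`_d) @ \oo --> 0.
  by apply: cvg_trans (cvgD (cvg_cst _) mid) _; rewrite addr0.
have [dT | dT] := boolP (0 < d < T)%N.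
  have ratio0 : (fun n => z2 n / root_pow T (z1 n) ^+ d) @ \oo --> 0.
    by apply: cvg0_div_root_pow => //; apply: rate; lia.
  by apply: cvg_trans (cvgM ratio0 (cvg_cst _)) _; rewrite mul0r.
rewrite coef_shifted_sum_eq0; last by move: dT; lia.
by under eq_cvg do rewrite mulr0; exact: cvg_cst.
Qed.

Lemma cvg_node_estimator M T N (z1 z2 : nat -> R) (x w : 'I_N -> R)
    (A Rv : 'I_M -> R) (S : 'I_M -> 'I_T.-1 -> R) j :
  (0 < T)%N -> (forall n, 0 < z1 n) -> (forall n, 0 < z2 n) -> z1 @ \oo --> 0 ->
  ((2 <= T)%N -> (fun n => z2 n `^ (T%:R / T.-1%:R) / z1 n) @ \oo --> 0) ->
  (j <= M)%N -> (j * T < N)%N ->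
  (forall d : 'I_N, \sum_(i < N) x i ^+ d * w i = (d == j * T :> nat)%:R) ->
  (fun n => (\sum_(i < N) node_output R M T (z1 n) (z2 n) A Rv S (x i) * w i)
      / root_pow T (z1 n) ^+ (j * T))
    @ \oo --> mixed_esym (fun i => A i + Rv i) Rv j.
Proof.
move=> T_gt0 z1_gt0 z2_gt0 z1_0 rate jM jTN dual.
pose P n := \prod_(i < M) encoding_poly T (z1 n) (z2 n) (A i) (Rv i) (S i).
have node n i : node_output R M T (z1 n) (z2 n) A Rv S (x i) = (P n).[x i].
  by rewrite horner_prod; apply: eq_bigr => l _; rewrite horner_encoding_poly.
under eq_cvg do under eq_bigr do rewrite node.
rewrite -(@coef_prod_mixed_esym _ _ T) //.
apply: (@cvg_scaled_interpolation _ _ (M * T).+1 _ _ _ P) => //.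
- by rewrite ltnS leq_mul2r jM orbT.
- move=> n; apply: leq_trans (size_poly_prod_leq _ _) _.
  have : (\sum_(i < M) size (encoding_poly T (z1 n) (z2 n) (A i) (Rv i) (S i))
      <= M * T.+1)%N.
    rewrite -[M in (M * _)%N]card_ord -sum_nat_const.
    by apply: leq_sum => i _; exact: size_encoding_poly.
  by rewrite card_ord mulnS leq_subLR addnS ltnS.
- by move=> n; rewrite gt_eqF ?root_pow_gt0.
- exact: cvg_root_pow0.
- apply: cvg_coef_prod_scaled => [n | i d]; first by rewrite gt_eqF ?root_pow_gt0.
  exact: cvg_coef_encoding_poly_scaled.
Qed.

End Encoding.

Theorem proposition1 (R : realType) (M T N : nat) (eta sigma2 : R)
  (zeta1 zeta2 : nat -> R) (x : 'I_N -> R) :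
  (0 < M)%N -> (0 < T)%N -> 0 < eta -> 0 < sigma2 ->
  (forall n, 0 < zeta1 n) -> (forall n, 0 < zeta2 n) ->
  (fun n => zeta1 n / zeta2 n) @ \oo --> (0 : R) ->
  zeta2 @ \oo --> (0 : R) ->
  ((2 <= T)%N ->
     (fun n => (zeta2 n) `^ (T%:R / (T.-1)%:R) / zeta1 n) @ \oo --> (0 : R)) ->
  injective x ->
  N = ((M.-1) * T).+1 ->
  forall k : nat, (k < M)%N ->
  exists f : nat -> ('I_N -> R) -> R,
    forall (A Rv : 'I_M -> R) (S : 'I_M -> 'I_T.-1 -> R),
      (fun n => f n (fun j => @node_output R M T (zeta1 n) (zeta2 n) A Rv S (x j)))
        @ \oo --> @Dk R M eta sigma2 A Rv k.
Proof.
move=> M_gt0 T_gt0 _ _ z1_gt0 z2_gt0 ratio0 z2_0 rate x_inj N_eq k kM; subst N.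
have z1_0 : zeta1 @ \oo --> 0.
  by apply: (cvg0_ratio zeta1 zeta2) => // n; rewrite gt_eqF.
pose c j := (((alpha_c R eta sigma2)%:P + 'X) ^+ (M - j) * (- 'X) ^+ j)`_k.
exists (fun n v => \sum_(j < M) c j *
  ((\sum_i v i * vandermonde_dual x i (inord (j * T)))
     / root_pow T (zeta1 n) ^+ (j * T))).
move=> A Rv S; rewrite Dk_mixed_esym //; apply: cvg_sum_ord => j.
have jTN : (j * T < ((M.-1) * T).+1)%N.
  by rewrite ltnS leq_mul2r -ltnS prednK ?ltn_ord ?orbT.
apply: cvgM; first exact: cvg_cst.
apply: cvg_node_estimator => //; first exact: ltnW.
by move=> d; rewrite sum_exprn_vandermonde_dual // -val_eqE /= inordK.
Qed.
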